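(* Let $B\subseteq A$ be a unital inclusion of unital $C^*$-algebras and let $p\in B$ be a projection. If $B\subseteq A$ is $C^*$-irreducible, then so is $pBp\subseteq pAp$. Conversely, if $p$ is full in $B$ and $pBp\subseteq pAp$ is $C^*$-irreducible, then $B\subseteq A$ is $C^*$-irreducible; moreover, in this case the assignment $D\mapsto pDp$ is a bijection from the set of intermediate $C^*$-algebras $B\subseteq D\subseteq A$ onto the set of intermediate $C^*$-algebras $pBp\subseteq C\subseteq pAp$.
   Context: A unital inclusion $B\subseteq A$ of $C^*$-algebras is $C^*$-irreducible if every intermediate $C^*$-algebra $B\subseteq D\subseteq A$ is simple. A projection $p\in B$ is full in $B$ if it is not contained in any proper closed two-sided ideal of $B$. *)

From HB Require Import structures.
From mathcomp Require Import all_boot all_order all_algebra.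
From mathcomp Require Import all_classical all_reals all_analysis.
From mathcomp Require Import complex.
Set Implicit Arguments. Unset Strict Implicit. Unset Printing Implicit Defensive.
Import Order.TTheory GRing.Theory Num.Theory.
Import numFieldNormedType.Exports.
Local Open Scope classical_set_scope.
Local Open Scope ring_scope.

(** Unital C*-algebras: complete normed vector spaces over the complex
    numbers R[i] (R : realType, i.e. the real numbers) equipped with an
    associative bilinear multiplication [cmul] with unit [cone] (nonzero),
    an involution [star] that is conjugate linear and anti-multiplicative,
    a submultiplicative norm, and the C*-identity.
    (The multiplication is given explicitly rather than through
    GRing.Algebra because Hierarchy-Builder does not allow joining ring
    structures with Num.SemiNormedZmodule.) *)
HB.mixin Record isCstarAlgebra (R : realType) (A : Type)
  & CompleteNormedModule R[i] A := {
  cmul : A -> A -> A;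
  cone : A;
  cmulA : forall x y z : A, cmul x (cmul y z) = cmul (cmul x y) z;
  cmul1x : forall x : A, cmul cone x = x;
  cmulx1 : forall x : A, cmul x cone = x;
  cmulDl : forall x y z : A, cmul (x + y) z = cmul x z + cmul y z;
  cmulDr : forall x y z : A, cmul x (y + z) = cmul x y + cmul x z;
  cmulZl : forall (a : R[i]) (x y : A), cmul (a *: x) y = a *: cmul x y;
  cmulZr : forall (a : R[i]) (x y : A), cmul x (a *: y) = a *: cmul x y;
  cone_neq0 : cone <> 0;
  star : A -> A;
  starD : forall x y : A, star (x + y) = star x + star y;
  starZ : forall (a : R[i]) (x : A), star (a *: x) = Num.conj a *: star x;
  starM : forall x y : A, star (cmul x y) = cmul (star y) (star x);
  starK : forall x : A, star (star x) = x;
  normM_le : forall x y : A, `| cmul x y | <= `| x | * `| y |;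
  cstar_identity : forall x : A, `| cmul (star x) x | = `| x | ^+ 2
}.

#[short(type="cstarAlgType")]
HB.structure Definition CstarAlgebra (R : realType) :=
  {A of isCstarAlgebra R A & CompleteNormedModule R[i] A}.

Section Defs.
Context {R : realType} {A : cstarAlgType R}.

(** C*-subalgebra (not necessarily containing the unit of A):
    a norm-closed *-subalgebra. *)
Definition cstar_subalg (D : set A) : Prop :=
  [/\ D 0,
      (forall x y, D x -> D y -> D (x + y)),
      (forall (a : R[i]) x, D x -> D (a *: x)),
      (forall x y, D x -> D y -> D (cmul x y)) &
      (forall x, D x -> D (star x))] /\
  closed D.

Definition closed_ideal (D I : set A) : Prop :=
  I `<=` D /\
  [/\ I 0,
      (forall x y, I x -> I y -> I (x + y)),
      (forall (a : R[i]) x, I x -> I (a *: x)),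
      (forall d x, D d -> I x -> I (cmul d x) /\ I (cmul x d)) &
      closed I].

Definition simple_cstar (D : set A) : Prop :=
  D <> [set 0] /\
  forall I, closed_ideal D I -> I = [set 0] \/ I = D.

Definition intermediate (B E D : set A) : Prop :=
  [/\ cstar_subalg D, B `<=` D & D `<=` E].

Definition cstar_irreducible (B E : set A) : Prop :=
  forall D, intermediate B E D -> simple_cstar D.

Definition projection (p : A) : Prop := cmul p p = p /\ star p = p.

Definition full (B : set A) (p : A) : Prop :=
  forall I, closed_ideal B I -> I p -> I = B.

Definition corner (p : A) (D : set A) : set A := [set cmul (cmul p d) p | d in D].

End Defs.

From HB Require Import structures.
From mathcomp Require Import all_boot all_order all_algebra.
From mathcomp Require Import all_classical all_reals all_analysis.
From mathcomp Require Import complex.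
Import Order.TTheory GRing.Theory Num.Theory.
Local Open Scope classical_set_scope.
Local Open Scope ring_scope.

(* Cutting down by p maps intermediate algebras B <= D <= A to intermediate
   algebras pBp <= pDp <= pAp.  Every intermediate C of the corner inclusion
   is a corner: with E = {d | p B d B p <= C}, the idealizer
   M = {d | dE + Ed <= E} is a C*-algebra containing B and C with pMp = C.
   A corner pMp of a simple M by a projection p <> 0 is simple, since an
   ideal J of pMp generates the ideal {x in M | pMxMp <= J} of M.
   Conversely let p be full in B, hence in every D >= B.  For an ideal I of D,
   pIp is an ideal of pDp; if pIp = 0 then Ip = 0 by the C*-identity, so the
   right annihilator of I is an ideal of D containing p, hence 1, and I = 0;
   if pIp = pDp then p is in I and I = D.  Finally pD1p <= D2 forces
   D1 <= D2: the ideal {y in B | x D1 y <= D2} contains p, hence 1; use this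
   with x = p, and then, after taking adjoints, with x = 1. *)

Set Implicit Arguments.
Unset Strict Implicit.
Unset Printing Implicit Defensive.

Local Notation "x ⋆ y" := (cmul x y) (at level 40, left associativity).

Lemma additive_bounded_continuous (K : numFieldType) (V W : normedModType K)
    (f : V -> W) (k : K) : 0 <= k ->
  {morph f : x y / x - y} -> (forall x, `|f x| <= k * `|x|) -> continuous f.
Proof.
move=> k0 fB fk x; apply/cvgrPdist_lt => e e0.
have k1 : 0 < k + 1 by rewrite ltr_wpDl.
have kk1 : k <= k + 1 by rewrite lerDl.
near=> y; rewrite -fB; apply: le_lt_trans (fk _) _.
apply: le_lt_trans (ler_wpM2r (normr_ge0 _) kk1) _.
rewrite -ltr_pdivlMl //; near: y.
by apply: cvgr_dist_lt; rewrite // mulr_gt0 ?invr_gt0.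
Unshelve. all: by end_near.
Qed.

Section Algebra.
Context {R : realType} {A : cstarAlgType R}.
Implicit Types (a x y : A) (S D I : set A).

Lemma cmul0r x : 0 ⋆ x = 0.
Proof. by rewrite -(scale0r (0 : A)) cmulZl !scale0r. Qed.

Lemma cmulr0 x : x ⋆ 0 = 0.
Proof. by rewrite -(scale0r (0 : A)) cmulZr !scale0r. Qed.

Lemma cmulBr a x y : a ⋆ (x - y) = a ⋆ x - a ⋆ y.
Proof. by rewrite cmulDr -scaleN1r cmulZr scaleN1r. Qed.

Lemma cmulBl a x y : (x - y) ⋆ a = x ⋆ a - y ⋆ a.
Proof. by rewrite cmulDl -scaleN1r cmulZl scaleN1r. Qed.

Lemma star_cmul_self_eq0 x : star x ⋆ x = 0 -> x = 0.
Proof.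
move=> x0; have := cstar_identity x; rewrite x0 normr0 => /esym/eqP.
by rewrite expf_eq0 normr_eq0 => /andP[_ /eqP].
Qed.

Definition continuous_linear (f : A -> A) :=
  [/\ {morph f : x y / x + y}, forall c : R[i], {morph f : x / c *: x}
    & continuous f].

Lemma cmul_continuous_linear a : continuous_linear (cmul a).
Proof.
split; [by move=> x y; exact: cmulDr | by move=> c x; exact: cmulZr |].
exact: (additive_bounded_continuous (normr_ge0 a) (cmulBr a) (normM_le a)).
Qed.

Lemma cmul_continuous_linearl a : continuous_linear (cmul^~ a).
Proof.
split; [by move=> x y; exact: cmulDl | by move=> c x; exact: cmulZl |].
apply: (additive_bounded_continuous (normr_ge0 a) (cmulBl a)) => x.
by rewrite mulrC normM_le.
Qed.

Lemma sandwich_continuous_linear a b : continuous_linear (fun x => a ⋆ x ⋆ b).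
Proof.
have [lD lZ lC] := cmul_continuous_linear a.
have [rD rZ rC] := cmul_continuous_linearl b.
split=> [x y | c x | x]; first by rewrite lD rD.
  by rewrite lZ rZ.
exact: continuous_comp (lC x) (rC _).
Qed.

Definition closed_subspace S :=
  [/\ S 0, (forall x y, S x -> S y -> S (x + y)),
    (forall (c : R[i]) x, S x -> S (c *: x)) & closed S].

Lemma closed_subspace0 : closed_subspace [set 0].
Proof.
split=> [//| _ _ -> -> | c _ -> |]; rewrite ?addr0 ?scaler0 //.
exact/accessible_closed_set1/hausdorff_accessible/norm_hausdorff.
Qed.

Lemma closed_subspaceI S1 S2 : closed_subspace S1 -> closed_subspace S2 ->
  closed_subspace (S1 `&` S2).
Proof.
move=> [S1_0 S1D S1Z S1cl] [S2_0 S2D S2Z S2cl].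
split=> [//| x y [? ?] [? ?] | c x [? ?] |]; last exact: closedI.
  by split; [exact: S1D | exact: S2D].
by split; [exact: S1Z | exact: S2Z].
Qed.

Lemma closed_subspace_bigcap (T : Type) (P : set T) (S : T -> set A) :
  (forall i, P i -> closed_subspace (S i)) ->
  closed_subspace (\bigcap_(i in P) S i).
Proof.
move=> hS; split=> [i /hS[] | x y Sx Sy i Pi | c x Sx i Pi |] //.
- by have [_ SD _ _] := hS i Pi; apply: SD; [exact: Sx | exact: Sy].
- by have [_ _ SZ _] := hS i Pi; apply: SZ; exact: Sx.
- by apply: closed_bigI => i /hS[].
Qed.

Lemma closed_subspace_preimage f S : continuous_linear f ->
  closed_subspace S -> closed_subspace (f @^-1` S).
Proof.
move=> [fD fZ fC] [S0 SD SZ Scl]; split=> [| x y | c x |] /=.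
- by rewrite -(scale0r (0 : A)) fZ scale0r.
- by rewrite fD; exact: SD.
- by rewrite fZ; exact: SZ.
- exact: preimage_closed (fun x _ => fC x) Scl.
Qed.

Lemma subalg_subspace D : cstar_subalg D -> closed_subspace D.
Proof. by case=> -[]. Qed.

Lemma subalgM D x y : cstar_subalg D -> D x -> D y -> D (x ⋆ y).
Proof. by case=> -[] _ _ _ hM _ _; exact: hM. Qed.

Lemma subalg_star D x : cstar_subalg D -> D x -> D (star x).
Proof. by case=> -[] _ _ _ _ hS _; exact: hS. Qed.

Lemma ideal_subspace D I : closed_ideal D I -> closed_subspace I.
Proof. by case=> _ []. Qed.

Lemma idealMl D I d x : closed_ideal D I -> D d -> I x -> I (d ⋆ x).
Proof. by case=> _ [_ _ _ hM _] Dd Ix; case: (hM d x Dd Ix). Qed.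

Lemma idealMr D I d x : closed_ideal D I -> D d -> I x -> I (x ⋆ d).
Proof. by case=> _ [_ _ _ hM _] Dd Ix; case: (hM d x Dd Ix). Qed.

Lemma closed_ideal_setI D S : cstar_subalg D -> closed_subspace S ->
  (forall d s, D d -> D s -> S s -> S (d ⋆ s) /\ S (s ⋆ d)) ->
  closed_ideal D (D `&` S).
Proof.
move=> hD hS hM; have [DS_0 DSD DSZ DScl] :=
  closed_subspaceI (subalg_subspace hD) hS.
split=> [x [] // |]; split=> // d x Dd [Dx Sx].
by have [Sdx Sxd] := hM d x Dd Dx Sx; split; split=> //; apply: (subalgM hD).
Qed.

End Algebra.

Section Corner.
Context {R : realType} {A : cstarAlgType R}.
Implicit Types (x y : A) (S D I : set A).
Variable p : A.
Hypothesis pr : projection p.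

Let pp : p ⋆ p = p. Proof. by case: pr. Qed.

Lemma cmul_projr x : x ⋆ p ⋆ p = x ⋆ p.
Proof. by rewrite -cmulA pp. Qed.

Lemma corner_sandwich S y : corner p S y -> p ⋆ y ⋆ p = y.
Proof. by case=> x _ <-; rewrite !cmulA pp cmul_projr. Qed.

Lemma cornerT_subspace : closed_subspace (corner p setT).
Proof.
have -> : corner p setT = (fun y => p ⋆ y ⋆ p - y) @^-1` [set 0].
  apply/seteqP; split=> y /=; first by move/corner_sandwich ->; rewrite subrr.
  by move/eqP; rewrite subr_eq0 => /eqP <-; exists y.
apply: closed_subspace_preimage closed_subspace0.
have [lD lZ lC] := sandwich_continuous_linear p p.
split=> [x y | c x | x]; first by rewrite lD opprD addrACA.
  by rewrite lZ scalerBr.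
exact: cvgB (lC x) cvg_id.
Qed.

Lemma cornerE S : (forall x, S x -> S (p ⋆ x ⋆ p)) ->
  corner p S = S `&` corner p setT.
Proof.
move=> Sp; apply/seteqP; split=> [_ [x Sx <-] | y [Sy /corner_sandwich <-]].
  by split; [exact: Sp | exists x].
by exists y.
Qed.

Lemma corner_subspace S : closed_subspace S ->
  (forall x, S x -> S (p ⋆ x ⋆ p)) -> closed_subspace (corner p S).
Proof.
move=> hS Sp; have [S0 SD SZ _] := hS.
split=> [| _ _ [x Sx <-] [y Sy <-] | c _ [x Sx <-] |].
- by exists 0; rewrite ?cmulr0 ?cmul0r.
- by exists (x + y); [exact: SD | rewrite cmulDr cmulDl].
- by exists (c *: x); [exact: SZ | rewrite cmulZr cmulZl].
- by rewrite cornerE //; have [_ _ _] := closed_subspaceI hS cornerT_subspace.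
Qed.

Lemma corner_subset D : cstar_subalg D -> D p -> corner p D `<=` D.
Proof. by move=> hD Dp _ [x Dx <-]; do 2 apply: (subalgM hD) => //. Qed.

Lemma corner_subalg D : cstar_subalg D -> D p -> cstar_subalg (corner p D).
Proof.
move=> hD Dp; have Dpp x : D x -> D (p ⋆ x ⋆ p).
  by move=> Dx; apply: (corner_subset hD Dp); exists x.
have [C0 CD CZ Ccl] := corner_subspace (subalg_subspace hD) Dpp.
split=> //; split=> // [_ _ [x Dx <-] [y Dy <-] | _ [x Dx <-]].
  exists (x ⋆ p ⋆ y); last by rewrite !cmulA cmul_projr.
  by apply: (subalgM hD) => //; apply: (subalgM hD).
by exists (star x); [exact: subalg_star | rewrite !starM pr.2 cmulA].
Qed.

Lemma corner_ideal D I : cstar_subalg D -> D p -> closed_ideal D I ->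
  closed_ideal (corner p D) (corner p I).
Proof.
move=> hD Dp hI.
have Ipp x : I x -> I (p ⋆ x ⋆ p).
  by move=> Ix; apply: (idealMr hI Dp); apply: (idealMl hI Dp).
have [C0 CD CZ Ccl] := corner_subspace (ideal_subspace hI) Ipp.
split; first by apply: image_subset; case: hI.
split=> // _ _ [d Dd <-] [x Ix <-]; split.
  exists (d ⋆ p ⋆ x); last by rewrite !cmulA cmul_projr.
  by apply: (idealMl hI _ Ix); apply: (subalgM hD).
exists (x ⋆ p ⋆ d); last by rewrite !cmulA cmul_projr.
by apply: (idealMr hI Dd); apply: (idealMr hI Dp Ix).
Qed.

Lemma corner_intermediate B D : B p -> intermediate B setT D ->
  intermediate (corner p B) (corner p setT) (corner p D).
Proof.
move=> Bp [hD BD _]; split; last exact: image_subset.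
  by apply: corner_subalg => //; exact: BD.
exact: image_subset.
Qed.

End Corner.

Section Lift.
Context {R : realType} {A : cstarAlgType R}.
Implicit Types (x y : A) (S : set A).

Definition idealizer S := [set d | forall e, S e -> S (d ⋆ e) /\ S (e ⋆ d)].

Lemma idealizer_subalg S : closed_subspace S -> (forall x, S x -> S (star x)) ->
  cstar_subalg (idealizer S).
Proof.
move=> hS Sstar.
have : closed_subspace (\bigcap_(e in S)
    ((cmul^~ e) @^-1` S `&` (cmul e) @^-1` S)).
  apply: closed_subspace_bigcap => e _.
  apply: closed_subspaceI; apply: closed_subspace_preimage hS.
    exact: cmul_continuous_linearl.
  exact: cmul_continuous_linear.
move=> [M0 MD MZ Mcl]; split=> //; split=> // [x y Mx My e Se | x Mx e Se].
  split; first by rewrite -cmulA; apply: (Mx _ (My e Se).1).1.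
  by rewrite cmulA; apply: (My _ (Mx e Se).2).2.
have [Sxe Sex] := Mx _ (Sstar e Se).
by split; [move: (Sstar _ Sex) | move: (Sstar _ Sxe)]; rewrite starM starK.
Qed.

Variables (B C : set A) (p : A).
Hypotheses (pr : projection p) (hB : cstar_subalg B) (B1 : B cone).
Hypothesis hC : intermediate (corner p B) (corner p setT) C.

Let E :=
  \bigcap_(b1 in B) \bigcap_(b2 in B) [set d | C (p ⋆ b1 ⋆ d ⋆ (b2 ⋆ p))].

Let C_subalg : cstar_subalg C. Proof. by case: hC. Qed.

Let CB b : B b -> C (p ⋆ b ⋆ p).
Proof. by case: hC => _ BC _ Bb; apply: BC; exists b. Qed.

Let E_subspace : closed_subspace E.
Proof.
do 2 apply: closed_subspace_bigcap => ? _.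
apply: closed_subspace_preimage (subalg_subspace C_subalg).
exact: sandwich_continuous_linear.
Qed.

Let E_star x : E x -> E (star x).
Proof.
move=> Ex b1 Bb1 b2 Bb2 /=.
have := subalg_star C_subalg (Ex _ (subalg_star hB Bb2) _ (subalg_star hB Bb1)).
by rewrite !starM !starK pr.2 !cmulA.
Qed.

Let E1 : E cone.
Proof.
move=> b1 Bb1 b2 Bb2 /=; rewrite cmulx1 cmulA -(cmulA p).
exact/CB/(subalgM hB).
Qed.

Let B_idealizer : B `<=` idealizer E.
Proof.
move=> b Bb e Ee; split=> b1 Bb1 b2 Bb2 /=.
  by have /= := Ee _ (subalgM hB Bb1 Bb) _ Bb2; rewrite !cmulA.
by have /= := Ee _ Bb1 _ (subalgM hB Bb Bb2); rewrite !cmulA.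
Qed.

Let C_idealizer : C `<=` idealizer E.
Proof.
move=> c Cc e Ee; have [_ _ CT] := hC.
have cE : p ⋆ c ⋆ p = c := corner_sandwich pr (CT _ Cc).
split=> b1 Bb1 b2 Bb2 /=.
  have -> : p ⋆ b1 ⋆ (c ⋆ e) ⋆ (b2 ⋆ p) =
      p ⋆ b1 ⋆ p ⋆ c ⋆ (p ⋆ cone ⋆ e ⋆ (b2 ⋆ p)).
    by rewrite -{1}cE cmulx1 !cmulA.
  apply: (subalgM C_subalg) (Ee _ B1 _ Bb2).
  by apply: (subalgM C_subalg) Cc; exact: CB.
have -> : p ⋆ b1 ⋆ (e ⋆ c) ⋆ (b2 ⋆ p) =
    p ⋆ b1 ⋆ e ⋆ (cone ⋆ p) ⋆ c ⋆ (p ⋆ b2 ⋆ p).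
  by rewrite -{1}cE cmul1x !cmulA.
by apply: (subalgM C_subalg) (CB Bb2); apply: (subalgM C_subalg) Cc; exact: Ee.
Qed.

Lemma corner_lift : exists M, intermediate B setT M /\ corner p M = C.
Proof.
exists (idealizer E); split.
  by split=> //; apply: idealizer_subalg; [exact: E_subspace | exact: E_star].
apply/seteqP; split=> [_ [d Md <-] | c Cc].
  by have /= := (Md _ E1).1 _ B1 _ B1; rewrite !cmulx1 cmul1x.
have [_ _ CT] := hC.
by exists c; [exact: C_idealizer | exact: (corner_sandwich pr (CT _ Cc))].
Qed.

End Lift.

Section Simplicity.
Context {R : realType} {A : cstarAlgType R}.
Implicit Types (x p : A) (B D I M : set A).

Lemma simple_corner M p : projection p -> p <> 0 -> cstar_subalg M -> M p ->
  simple_cstar M -> simple_cstar (corner p M).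
Proof.
move=> pr p0 hM Mp [_ Msimple].
have CM := corner_subset hM Mp.
have Cp : corner p M p by exists p; rewrite // !pr.1.
split=> [C0 | J hJ]; first by apply: p0; move: Cp; rewrite C0.
have [JC [J0 _ _ _ _]] := hJ.
pose I := M `&` \bigcap_(m1 in M) \bigcap_(m2 in M)
  [set x | J (p ⋆ m1 ⋆ x ⋆ (m2 ⋆ p))].
have hI : closed_ideal M I.
  apply: closed_ideal_setI => //.
    do 2 apply: closed_subspace_bigcap => ? _.
    apply: closed_subspace_preimage (ideal_subspace hJ).
    exact: sandwich_continuous_linear.
  move=> d x Md Mx Ix; split=> m1 Mm1 m2 Mm2 /=.
    by have /= := Ix _ (subalgM hM Mm1 Md) _ Mm2; rewrite !cmulA.
  by have /= := Ix _ Mm1 _ (subalgM hM Md Mm2); rewrite !cmulA.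
have JI : J `<=` I.
  move=> j Jj; have jE := corner_sandwich pr (JC _ Jj).
  split=> [| m1 Mm1 m2 Mm2 /=]; first exact/CM/JC.
  have -> : p ⋆ m1 ⋆ j ⋆ (m2 ⋆ p) = p ⋆ m1 ⋆ p ⋆ j ⋆ (p ⋆ m2 ⋆ p).
    by rewrite -{1}jE !cmulA.
  by apply: (idealMr hJ); [exists m2 | apply: (idealMl hJ) => //; exists m1].
case: (Msimple I hI) => I0; [left | right]; apply/seteqP; split=> //.
- by move=> x /JI; rewrite I0.
- by move=> _ ->.
- move=> c Cc; have : I c by rewrite I0; exact: CM.
  by case=> _ /(_ p Mp p Mp) /=; rewrite pr.1 (corner_sandwich pr Cc).
Qed.

Lemma full_cone D p I : full D p -> D cone -> closed_ideal D I -> I p -> I cone.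
Proof. by move=> fp D1 hI Ip; rewrite (fp I hI Ip). Qed.

Lemma full_superset B D p : cstar_subalg B -> B cone -> B p -> B `<=` D ->
  full B p -> full D p.
Proof.
move=> hB B1 Bp BD fp I hI Ip; have [ID _] := hI.
have hBI : closed_ideal B (B `&` I).
  apply: closed_ideal_setI (ideal_subspace hI) _ => // b x Bb _ Ix.
  by split; [exact: (idealMl hI (BD _ Bb)) | exact: (idealMr hI (BD _ Bb))].
have [_ I1] := full_cone fp B1 hBI (conj Bp Ip).
apply/seteqP; split=> // d Dd; rewrite -(cmul1x d); exact: (idealMr hI Dd).
Qed.

Lemma full_ideal_eq0 D p I : cstar_subalg D -> D cone -> D p -> full D p ->
  closed_ideal D I -> (forall x, I x -> x ⋆ p = 0) -> I = [set 0].
Proof.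
move=> hD D1 Dp fp hI Ip0; have [_ [I0 _ _ _ _]] := hI.
pose N := D `&` \bigcap_(x in I) (cmul x @^-1` [set 0]).
have hN : closed_ideal D N.
  apply: closed_ideal_setI => //.
    apply: closed_subspace_bigcap => x _.
    apply: closed_subspace_preimage closed_subspace0.
    exact: cmul_continuous_linear.
  move=> d z Dd Dz Nz; split=> x Ix /=.
    by rewrite cmulA; apply: Nz; exact: (idealMr hI Dd Ix).
  by rewrite cmulA Nz // cmul0r.
have [_ N1] := full_cone fp D1 hN (conj Dp Ip0).
by apply/seteqP; split=> [x Ix | _ ->] //=; rewrite -(cmulx1 x); exact: N1.
Qed.

Lemma simple_of_simple_corner D p : projection p -> cstar_subalg D ->
  D cone -> D p -> full D p -> simple_cstar (corner p D) -> simple_cstar D.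
Proof.
move=> pr hD D1 Dp fp [_ Csimple]; split.
  by move=> D0; apply: (@cone_neq0 R A); move: D1; rewrite D0.
move=> I hI; have [ID _] := hI.
case: (Csimple _ (corner_ideal pr hD Dp hI)) => CI; [left | right].
  apply: (full_ideal_eq0 hD D1 Dp fp hI) => x Ix; apply: star_cmul_self_eq0.
  suff : corner p I (star (x ⋆ p) ⋆ (x ⋆ p)) by rewrite CI.
  exists (star x ⋆ x); first exact: (idealMl hI (subalg_star hD (ID _ Ix)) Ix).
  by rewrite starM pr.2 !cmulA.
have Ip : I p.
  have : corner p I p by rewrite CI; exists p; rewrite // !pr.1.
  by case=> x Ix <-; apply: (idealMr hI Dp); apply: (idealMl hI Dp).
exact: fp I hI Ip.
Qed.

Lemma full_drop_projr B D1 D2 p x :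
  cstar_subalg B -> B cone -> B p -> full B p ->
  cstar_subalg D1 -> cstar_subalg D2 -> B `<=` D1 -> B `<=` D2 ->
  (forall d, D1 d -> D2 (x ⋆ d ⋆ p)) -> forall d, D1 d -> D2 (x ⋆ d).
Proof.
move=> hB B1 Bp fp hD1 hD2 BD1 BD2 xdp.
pose J := B `&` \bigcap_(d in D1) (cmul (x ⋆ d) @^-1` D2).
have hJ : closed_ideal B J.
  apply: closed_ideal_setI => //.
    apply: closed_subspace_bigcap => d _.
    apply: closed_subspace_preimage (subalg_subspace hD2).
    exact: cmul_continuous_linear.
  move=> b y Bb By Jy; split=> d D1d /=.
    by rewrite cmulA -(cmulA x); apply: Jy; apply: (subalgM hD1) D1d (BD1 _ Bb).
  by rewrite cmulA; apply: (subalgM hD2) (BD2 _ Bb); apply: Jy.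
have [_ J1] := full_cone fp B1 hJ (conj Bp xdp).
by move=> d D1d; rewrite -(cmulx1 (x ⋆ d)); exact: J1.
Qed.

Lemma subset_of_corner_subset B D1 D2 p : projection p -> cstar_subalg B ->
  B cone -> B p -> full B p -> cstar_subalg D1 -> cstar_subalg D2 ->
  B `<=` D1 -> B `<=` D2 -> corner p D1 `<=` D2 -> D1 `<=` D2.
Proof.
move=> pr hB B1 Bp fp hD1 hD2 BD1 BD2 CD.
have drop := full_drop_projr hB B1 Bp fp hD1 hD2 BD1 BD2.
have pD : forall d, D1 d -> D2 (p ⋆ d).
  by apply: drop => d D1d; apply: CD; exists d.
have dp d : D1 d -> D2 (cone ⋆ d ⋆ p).
  move=> D1d; rewrite cmul1x -[d ⋆ p]starK starM pr.2.
  exact/(subalg_star hD2)/pD/(subalg_star hD1).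
by move=> d D1d; rewrite -(cmul1x d); exact: drop dp d D1d.
Qed.

End Simplicity.

Theorem lemma3p2 (R : realType) (A : cstarAlgType R) (B : set A) (p : A) :
  cstar_subalg B -> B cone -> B p -> projection p ->
  ((cstar_irreducible B setT -> p <> 0 ->
      cstar_irreducible (corner p B) (corner p setT)) /\
   (full B p -> cstar_irreducible (corner p B) (corner p setT) ->
      cstar_irreducible B setT /\
      set_bij [set D | intermediate B setT D]
              [set C | intermediate (corner p B) (corner p setT) C]
              (corner p))).
Proof.
move=> hB B1 Bp pr; split=> [irrB p0 C hC | fp irrC].
  have [M [hM <-]] := corner_lift pr hB B1 hC.
  have [hM' BM _] := hM.
  exact: simple_corner pr p0 hM' (BM _ Bp) (irrB M hM).
have irrB : cstar_irreducible B setT.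
  move=> D hD; have [hD' BD _] := hD.
  apply: (simple_of_simple_corner pr hD' (BD _ B1) (BD _ Bp)).
    exact: full_superset hB B1 Bp BD fp.
  exact/irrC/corner_intermediate.
split=> //; split=> [D | D1 D2 /set_mem[hD1 BD1 _] /set_mem[hD2 BD2 _] e | C].
- exact: corner_intermediate.
- have sub := subset_of_corner_subset pr hB B1 Bp fp.
  apply/seteqP; split; apply: sub => //.
    by rewrite e; exact: corner_subset hD2 (BD2 _ Bp).
  by rewrite -e; exact: corner_subset hD1 (BD1 _ Bp).
- by move=> /(corner_lift pr hB B1)[M [hM <-]]; exists M.
Qed.
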